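(* Let $q\ge 4$ be a prime power. Let $\ell$ and $m$ be distinct lines of $PG(2,q)$, let $P=\ell\cap m$, let $Q$ be a point of $\ell$ different from $P$, and let $R,S,T$ be three distinct points of $m$ different from $P$. Then $A=(\ell\setminus\{P,Q\})\cup\{R,S,T\}$ is a minimal $(1,2)$-saturating set of size $q+2$ in $PG(2,q)$.
   Context: $PG(2,q)$ is the projective plane over $\mathbb{F}_q$. For a point set $A$, a secant of $A$ is a line $\ell$ with $|\ell\cap A|\ge2$, counted with multiplicity $\binom{|\ell\cap A|}{2}$. A set $A$ of points of $PG(2,q)$ is $(1,\mu)$-saturating if (M1) $A$ spans $PG(2,q)$, (M2) $A\neq PG(2,q)$, and (M3) every point not in $A$ lies on secants of $A$ whose multiplicities sum to at least $\mu$. A $(1,\mu)$-saturating set of size $n$ is minimal if it does not contain a $(1,\mu)$-saturating set of size $n-1$. *)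

From HB Require Import structures.
From mathcomp Require Import all_boot all_order all_algebra all_field.
Set Implicit Arguments. Unset Strict Implicit. Unset Printing Implicit Defensive.
Import GRing.Theory.
Local Open Scope ring_scope.

(* Model of PG(2,q): F a finite field with #|F| = q.  A point is a nonzero
   vector of F^3 normalized so that its first nonzero coordinate is 1
   (a canonical representative of the 1-dimensional subspace).  Lines are
   represented dually by normalized vectors too; point p lies on line L
   iff p . L = 0. *)

Definition normv (F : finFieldType) (v : 'rV[F]_3) : bool :=
  [exists i : 'I_3, (v 0 i == 1) && [forall j : 'I_3, (j < i)%N ==> (v 0 j == 0)]].

Definition point (F : finFieldType) := {v : 'rV[F]_3 | normv v}.
HB.instance Definition _ (F : finFieldType) := Finite.on (point F).

Definition line (F : finFieldType) := {v : 'rV[F]_3 | normv v}.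
HB.instance Definition _ (F : finFieldType) := Finite.on (line F).

Definition incident (F : finFieldType) (p : point F) (L : line F) : bool :=
  (val p *m (val L)^T) 0 0 == 0.

Definition pts (F : finFieldType) (L : line F) : {set point F} :=
  [set p | incident p L].

Definition spans (F : finFieldType) (A : {set point F}) : bool :=
  \rank (\sum_(p in A) <<val p>>)%MS == 3%N.

Definition secant_mult (F : finFieldType) (A : {set point F}) (x : point F) : nat :=
  \sum_(L : line F | incident x L && (2 <= #|pts L :&: A|)%N) 'C(#|pts L :&: A|, 2).

Definition saturating (F : finFieldType) (mu : nat) (A : {set point F}) : Prop :=
  [/\ spans A, A != [set: point F] &
      forall x : point F, x \notin A -> (mu <= secant_mult A x)%N].

Definition minimal_saturating (F : finFieldType) (mu n : nat) (A : {set point F}) : Prop :=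
  [/\ saturating mu A, #|A| = n &
      ~ (exists B : {set point F}, [/\ B \subset A, #|B| = n.-1 & saturating mu B])].

From mathcomp Require Import all_boot all_order all_algebra all_field.
From mathcomp Require Import ring zify.
Set Implicit Arguments. Unset Strict Implicit. Unset Printing Implicit Defensive.
Import GRing.Theory.
Local Open Scope ring_scope.

(* A point of [l] or [m] outside [A] lies on one of these lines, which carry at least
   three points of [A] (this is where [q >= 4] is used).  A point [x] off both lines
   sees [R], [S], [T] along three distinct lines, each meeting [l] in a point other
   than [P]; at most one of them passes through [Q], so the other two are secants.
   For minimality, let [B] be [A] minus a point [a].  Every secant of [B] through a
   point [x] off [l] and [m] joins a point of [B] on [m] to a point of [B] on [l].
   Pick [x] such that all but one of its joins with the points of [B] on [m] meet [l]
   in [Q] or [a]: a point of the line [SQ] when [a = R], the meet of [aR] and [QS]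
   when [a] is on [l].  Then [x] lies on a single secant, of multiplicity 1. *)

Section Coordinates.
Variable F : finFieldType.
Implicit Types u v w : 'rV[F]_3.

Definition i1 : 'I_3 := @Ordinal 3 1 isT.
Definition i2 : 'I_3 := @Ordinal 3 2 isT.
Local Notation x0 v := (v 0 0).
Local Notation x1 v := (v 0 i1).
Local Notation x2 v := (v 0 i2).

Lemma ord3P (i : 'I_3) : [\/ i = 0, i = i1 | i = i2].
Proof.
case: i => [[|[|[|k]]] Hk] //.
- by constructor 1; apply: val_inj.
- by constructor 2; apply: val_inj.
- by constructor 3; apply: val_inj.
Qed.

Lemma row3P u v : x0 u = x0 v -> x1 u = x1 v -> x2 u = x2 v -> u = v.
Proof. by move=> h0 h1 h2; apply/rowP => i; case: (ord3P i) => ->. Qed.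

Definition dot u v := x0 u * x0 v + x1 u * x1 v + x2 u * x2 v.

Lemma dotE u v : (u *m v^T) 0 0 = dot u v.
Proof.
rewrite mxE !big_ord_recl big_ord0 !mxE addr0 /dot addrA.
by congr (_ * _ + _ * _ + _ * _); congr (_ _ _); apply: val_inj.
Qed.

Lemma dotC u v : dot u v = dot v u.
Proof. by rewrite /dot; ring. Qed.

Lemma dot_scaler (k : F) u v : dot u (k *: v) = k * dot u v.
Proof. by rewrite /dot !mxE /=; ring. Qed.

Definition cross u v : 'rV[F]_3 :=
  \row_(i < 3) [:: x1 u * x2 v - x2 u * x1 v;
                 x2 u * x0 v - x0 u * x2 v;
                 x0 u * x1 v - x1 u * x0 v]`_i.

Lemma cross_scaler (k : F) u v : cross u (k *: v) = k *: cross u v.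
Proof. by apply: row3P; rewrite !mxE /=; ring. Qed.

Lemma cross_scalel (k : F) u v : cross (k *: u) v = k *: cross u v.
Proof. by apply: row3P; rewrite !mxE /=; ring. Qed.

Lemma crossvv u : cross u u = 0.
Proof. by apply: row3P; rewrite !mxE /=; ring. Qed.

Lemma dot_crossl u v : dot u (cross u v) = 0.
Proof. by rewrite /dot !mxE /=; ring. Qed.

Lemma dot_crossr u v : dot v (cross u v) = 0.
Proof. by rewrite /dot !mxE /=; ring. Qed.

Lemma cross_cross w u v : cross w (cross u v) = dot w v *: u - dot w u *: v.
Proof. by apply: row3P; rewrite /dot !mxE /=; ring. Qed.

Lemma normvP v : normv v <->
  [\/ x0 v = 1, x0 v = 0 /\ x1 v = 1 | [/\ x0 v = 0, x1 v = 0 & x2 v = 1]].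
Proof.
split.
- case/existsP => i /andP [/eqP h /forallP hj].
  case: (ord3P i) => ?; subst i.
  + by constructor 1.
  + by constructor 2; split => //; apply/eqP; exact: (hj 0).
  + constructor 3; split => //; apply/eqP; [exact: (hj 0)| exact: (hj i1)].
- case=> [h|[h0 h1]|[h0 h1 h2]]; apply/existsP.
  + by exists 0; rewrite h eqxx; apply/forallP.
  + exists i1; rewrite h1 eqxx /=; apply/forallP => j; apply/implyP => hj.
    by case: (ord3P j) hj => -> // _; rewrite h0.
  + exists i2; rewrite h2 eqxx /=; apply/forallP => j; apply/implyP => hj.
    by case: (ord3P j) hj => -> // _; rewrite ?h0 ?h1.
Qed.

Lemma normv_neq0 v : normv v -> v != 0.
Proof.
move=> /normvP h; apply/eqP => v0; move: h; rewrite v0 !mxE.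
by case=> [|[_]|[_ _]] /eqP; rewrite eq_sym oner_eq0.
Qed.

Lemma normv_scale v : v != 0 -> exists2 k : F, k != 0 & normv (k *: v).
Proof.
move=> v0.
have [h0|h0] := eqVneq (x0 v) 0; last first.
  exists (x0 v)^-1; first by rewrite invr_eq0.
  by apply/normvP; constructor 1; rewrite mxE mulVf.
have [h1|h1] := eqVneq (x1 v) 0; last first.
  exists (x1 v)^-1; first by rewrite invr_eq0.
  by apply/normvP; constructor 2; rewrite !mxE h0 mulr0 mulVf.
have [h2|h2] := eqVneq (x2 v) 0; last first.
  exists (x2 v)^-1; first by rewrite invr_eq0.
  by apply/normvP; constructor 3; rewrite !mxE h0 h1 mulr0 mulVf.
by case/eqP: v0; apply: row3P; rewrite ?h0 ?h1 ?h2 mxE.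
Qed.

(* Two normalized vectors with vanishing cross product are proportional, and the
   normalization pins the scalar down to 1. *)
Lemma normv_cross_eq0 u v : normv u -> normv v -> cross u v = 0 -> u = v.
Proof.
move=> /normvP hu /normvP hv /rowP e.
move: (e 0) (e i1) (e i2); rewrite !mxE /=.
case: hu => [a0|[a0 a1]|[a0 a1 a2]]; case: hv => [b0|[b0 b1]|[b0 b1 b2]];
rewrite ?a0 ?a1 ?a2 ?b0 ?b1 ?b2 ?mulr1 ?mul1r ?mulr0 ?mul0r ?subr0 ?sub0r;
move=> e0 e1 e2.
all: try by move: e0 => /eqP; rewrite ?oppr_eq0 ?oner_eq0.
all: try by move: e1 => /eqP; rewrite ?oppr_eq0 ?oner_eq0.
all: try by move: e2 => /eqP; rewrite ?oppr_eq0 ?oner_eq0.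
all: apply: row3P; rewrite ?a0 ?a1 ?a2 ?b0 ?b1 ?b2 //.
all: try by apply/eqP; rewrite -subr_eq0; apply/eqP.
all: by apply/eqP; rewrite eq_sym -subr_eq0; apply/eqP.
Qed.

Lemma normv_cross_neq0 u v : normv u -> normv v -> u != v -> cross u v != 0.
Proof. by move=> nu nv; apply: contra => /eqP /(normv_cross_eq0 nu nv) ->. Qed.

Lemma normv_orth_exists a b : normv a -> normv b -> a != b ->
  exists c, [/\ normv c, dot a c = 0 & dot b c = 0].
Proof.
move=> na nb ab; have [k _ nk] := normv_scale (normv_cross_neq0 na nb ab).
by exists (k *: cross a b); rewrite !dot_scaler dot_crossl dot_crossr !mulr0.
Qed.

(* Both [c] and [d] are multiples of [cross a b], by the expansion [cross_cross]. *)
Lemma normv_orth_uniq a b c d : normv a -> normv b -> normv c -> normv d -> a != b ->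
  dot a c = 0 -> dot b c = 0 -> dot a d = 0 -> dot b d = 0 -> c = d.
Proof.
move=> na nb nc nd ab ac bc ad bd.
have [k _ nk] := normv_scale (normv_cross_neq0 na nb ab).
suff orth_eq x : normv x -> dot a x = 0 -> dot b x = 0 -> x = k *: cross a b.
  by rewrite (orth_eq c) // (orth_eq d).
move=> nx ax bx; apply: normv_cross_eq0 => //.
by rewrite cross_scaler cross_cross dotC bx dotC ax !scale0r subr0 scaler0.
Qed.

Definition mk3 (x y z : F) : 'rV[F]_3 := \row_(i < 3) [:: x; y; z]`_i.

Lemma card_dot_eq0_param w (phi : F * F -> 'rV[F]_3) :
  injective phi -> (forall yz, dot (phi yz) w = 0) ->
  (forall v, dot v w = 0 -> exists yz, v = phi yz) ->
  #|[set v | dot v w == 0]| = (#|F| * #|F|)%N.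
Proof.
move=> phi_inj phi_orth phi_onto.
have -> : [set v | dot v w == 0] = phi @: setT.
  apply/setP => v; rewrite inE; apply/eqP/imsetP.
  - by move=> /phi_onto [yz ->]; exists yz.
  - by case=> yz _ ->.
by rewrite card_imset // cardsT card_prod.
Qed.

(* Solve [dot v w = 0] for the coordinate of [v] at the leading 1 of [w]. *)
Lemma card_dot_eq0 w : normv w -> #|[set v | dot v w == 0]| = (#|F| * #|F|)%N.
Proof.
move=> /normvP [a0|[a0 a1]|[a0 a1 a2]].
- apply: (@card_dot_eq0_param w (fun yz => mk3 (-(yz.1 * x1 w + yz.2 * x2 w)) yz.1 yz.2)).
  + by move=> [y z] [y' z'] /rowP e; move: (e i1) (e i2); rewrite !mxE /= => -> ->.
  + by move=> [y z]; rewrite /dot !mxE /= a0; ring.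
  + move=> v hv; exists (x1 v, x2 v); apply: row3P; rewrite !mxE //=.
    by apply/eqP; rewrite -subr_eq0 opprK -hv /dot a0; apply/eqP; ring.
- apply: (@card_dot_eq0_param w (fun yz => mk3 yz.1 (-(yz.2 * x2 w)) yz.2)).
  + by move=> [y z] [y' z'] /rowP e; move: (e 0) (e i2); rewrite !mxE /= => -> ->.
  + by move=> [y z]; rewrite /dot !mxE /= a0 a1; ring.
  + move=> v hv; exists (x0 v, x2 v); apply: row3P; rewrite !mxE //=.
    by apply/eqP; rewrite -subr_eq0 opprK -hv /dot a0 a1; apply/eqP; ring.
- apply: (@card_dot_eq0_param w (fun yz => mk3 yz.1 yz.2 0)).
  + by move=> [y z] [y' z'] /rowP e; move: (e 0) (e i1); rewrite !mxE /= => -> ->.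
  + by move=> [y z]; rewrite /dot !mxE /= a0 a1 a2; ring.
  + move=> v hv; exists (x0 v, x1 v); apply: row3P; rewrite !mxE //=.
    by move: hv; rewrite /dot a0 a1 a2 !mulr0 !add0r mulr1.
Qed.

End Coordinates.

Section Incidence.
Variable F : finFieldType.
Implicit Types (p q x : point F) (L M : line F) (A B : {set point F}).

Lemma incidentE p L : incident p L = (dot (val p) (val L) == 0).
Proof. by rewrite /incident dotE. Qed.

Lemma incident_line_uniq p q L M : p != q -> incident p L -> incident q L ->
  incident p M -> incident q M -> L = M.
Proof.
rewrite !incidentE => pq /eqP pL /eqP qL /eqP pM /eqP qM; apply: val_inj.
exact: (normv_orth_uniq (valP p) (valP q) (valP L) (valP M)).
Qed.

Lemma incident_point_uniq p q L M : L != M -> incident p L -> incident p M ->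
  incident q L -> incident q M -> p = q.
Proof.
rewrite !incidentE => LM /eqP pL /eqP pM /eqP qL /eqP qM; apply: val_inj.
by apply: (normv_orth_uniq (valP L) (valP M) (valP p) (valP q)); rewrite // dotC.
Qed.

Lemma exists_line_incident p q : p != q -> exists L, incident p L && incident q L.
Proof.
move=> pq; have [c [nc pc qc]] := normv_orth_exists (valP p) (valP q) pq.
by exists (exist _ c nc); rewrite !incidentE /= pc qc eqxx.
Qed.

Lemma exists_point_incident L M : L != M -> exists p, incident p L && incident p M.
Proof.
move=> LM; have [c [nc Lc Mc]] := normv_orth_exists (valP L) (valP M) LM.
by exists (exist _ c nc); rewrite !incidentE /= dotC Lc dotC Mc eqxx.
Qed.

Lemma incident_meetN L M P U : L != M -> incident P L -> incident P M ->
  incident U M -> U != P -> ~~ incident U L.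
Proof. by move=> LM PL PM UM; apply: contraNN => UL; apply/eqP/(incident_point_uniq LM). Qed.

Lemma card_ptsI_le1 L M : L != M -> (#|pts L :&: pts M| <= 1)%N.
Proof.
move=> LM; rewrite leqNgt; apply/negP => /card_gt1P [a [b [ha hb ab]]].
move: ha hb; rewrite !inE => /andP [aL aM] /andP [bL bM].
by move/eqP: ab; apply; apply: (incident_point_uniq LM).
Qed.

Lemma scale_point_inj : {in [pred pk : point F * F | pk.2 != 0] &,
  injective (fun pk => pk.2 *: val pk.1)}.
Proof.
move=> [p k] [p' k']; rewrite !inE /= => k0 k0' e.
have pp' : p = p'.
  apply/val_inj/(normv_cross_eq0 (valP p) (valP p'))/eqP.
  have : k *: cross (val p) (val p') == 0.
    by rewrite -cross_scalel e cross_scalel crossvv scaler0.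
  by rewrite scaler_eq0 (negbTE k0).
subst p'; congr (_, _); apply/eqP; rewrite -subr_eq0.
have : (k - k') *: val p == 0 by rewrite scalerBl e subrr.
by rewrite scaler_eq0 (negbTE (normv_neq0 (valP p))) orbF.
Qed.

(* The nonzero vectors orthogonal to [val L] are exactly the nonzero multiples of
   the points of [L], so [(q + 1) (q - 1) = q^2 - 1] counts them in two ways. *)
Lemma card_pts L : #|pts L| = (#|F| + 1)%N.
Proof.
set K := [set v | dot v (val L) == 0].
have cardK1 : #|K :\ 0| = (#|F| * #|F| - 1)%N.
  by rewrite -(card_dot_eq0 (valP L)) (cardsD1 0 K) inE /dot !mxE !mul0r !addr0 eqxx /= add1n subn1.
set D := setX (pts L) [set k : F | k != 0].
have imD : (fun pk => pk.2 *: val pk.1) @: D = K :\ 0.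
  apply/setP => v; rewrite !inE; apply/imsetP/andP.
  - case=> [[p k]]; rewrite !inE /= => /andP [pL k0] ->; split.
      by rewrite scaler_eq0 negb_or k0 normv_neq0 // (valP p).
    by move: pL; rewrite incidentE => /eqP pL; rewrite dotC dot_scaler dotC pL mulr0.
  - case=> v0 /eqP vL; have [k k0 nk] := normv_scale v0.
    exists (exist _ (k *: v) nk, k^-1); last by rewrite /= scalerA mulVf // scale1r.
    by rewrite !inE /= incidentE /= dotC dot_scaler dotC vL mulr0 eqxx invr_eq0.
have injD : {in D &, injective (fun pk => pk.2 *: val pk.1)}.
  by move=> x y; rewrite !inE => /andP [_ x0] /andP [_ y0]; apply: scale_point_inj.
have := card_in_imset injD; rewrite imD cardK1 cardsX.
have -> : #|[set k : F | k != 0]| = (#|F| - 1)%N.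
  by rewrite subn1 -(cardC1 (0 : F)); apply: eq_card => x; rewrite !inE.
have := card_finNzRing_gt1 F; set n := #|pts L|; set q := #|F| => q_gt1 e.
have e' : (n * (q - 1) = (q + 1) * (q - 1))%N by rewrite -e; nia.
by apply/eqP; rewrite -(@eqn_pmul2r (q - 1)) ?e' //; lia.
Qed.

Lemma exists_point_incident_neq2 L p q : exists x, [&& incident x L, x != p & x != q].
Proof.
have : (0 < #|pts L :\: [set p; q]|)%N.
  rewrite cardsD card_pts subn_gt0 (leq_ltn_trans (subset_leq_card (subsetIr _ _))) //.
  rewrite cards2 addn1 ltnS; apply: leq_trans (card_finNzRing_gt1 F).
  by case: (_ != _).
case/card_gt0P => x; rewrite !inE negb_or => /andP [/andP [xp xq] xL].
by exists x; rewrite xL xp xq.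
Qed.

Lemma not_spans_collinear A : ~~ spans A -> exists L, A \subset pts L.
Proof.
rewrite /spans; set S := (\sum_(p in A) <<val p>>)%MS => rkS.
have : kermx S^T != 0.
  by rewrite kermx_eq0 /row_free mxrank_tr neq_ltn ltn_neqAle rkS rank_leq_row.
move=> /eqP ker0; have [i ci] : exists i, row i (kermx S^T) != 0.
  apply/existsP; apply: contra_notT ker0 => /existsPn ker0; apply/row_matrixP => i.
  by rewrite row0; apply/eqP; move: (ker0 i); rewrite negbK.
set c := row i (kermx S^T) in ci.
have cS : c *m S^T = 0 by rewrite /c -row_mul mulmx_ker row0.
have [k _ nk] := normv_scale ci.
exists (exist _ (k *: c) nk); apply/subsetP => p pA.
have : (val p <= S)%MS by apply: (sumsmx_sup p) => //; rewrite genmxE.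
case/submxP => D pD.
rewrite inE incidentE /= dot_scaler -dotE pD.
by rewrite -mulmxA -[S]trmxK -trmx_mul cS trmx0 mulmx0 mxE mulr0.
Qed.

Lemma spans_of_noncollinear A L Y1 Y2 R : Y1 \in A -> Y2 \in A -> R \in A ->
  Y1 != Y2 -> incident Y1 L -> incident Y2 L -> ~~ incident R L -> spans A.
Proof.
move=> Y1A Y2A RA Y12 Y1L Y2L RL; apply: contraT => /not_spans_collinear [M /subsetP AM].
have Y1M := AM _ Y1A; have Y2M := AM _ Y2A; rewrite !inE in Y1M Y2M.
by move: (AM _ RA); rewrite inE -(incident_line_uniq Y12 Y1L Y2L Y1M Y2M) (negbTE RL).
Qed.

End Incidence.

Section Secants.
Variable F : finFieldType.
Implicit Types (x : point F) (L M : line F) (A B : {set point F}).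

Lemma secant_multE A x :
  secant_mult A x = (\sum_(L | incident x L) 'C(#|pts L :&: A|, 2))%N.
Proof.
rewrite /secant_mult big_mkcondr; apply: eq_bigr => L _.
by case: leqP => // h; rewrite bin_small.
Qed.

Lemma secant_mult_ge2 A x L1 L2 : L1 != L2 -> incident x L1 -> incident x L2 ->
  (2 <= #|pts L1 :&: A|)%N -> (2 <= #|pts L2 :&: A|)%N -> (2 <= secant_mult A x)%N.
Proof.
move=> L12 xL1 xL2 c1 c2; rewrite secant_multE (bigD1 L1) // (bigD1 L2) /=; last first.
  by rewrite xL2 eq_sym.
rewrite -[2%N]/(1 + 1)%N; apply: leq_add; first by rewrite bin_gt0.
by apply: leq_trans (leq_addr _ _); rewrite bin_gt0.
Qed.

Lemma secant_mult_ge2_rich A x L : incident x L ->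
  (3 <= #|pts L :&: A|)%N -> (2 <= secant_mult A x)%N.
Proof.
move=> xL c; rewrite secant_multE (bigD1 L) //=.
by apply: leq_trans (leq_addr _ _); apply: leq_trans (leq_bin2l 2 c).
Qed.

Lemma secant_mult_le1 B x L0 : incident x L0 ->
  (forall L, incident x L -> (2 <= #|pts L :&: B|)%N -> L = L0) ->
  (#|pts L0 :&: B| <= 2)%N -> (secant_mult B x <= 1)%N.
Proof.
move=> xL0 uniqL0 c0; rewrite secant_multE (bigD1 L0) //= big1 ?addn0.
  exact: leq_bin2l 2 c0.
move=> L /andP [xL LL0]; apply: bin_small; rewrite ltnNge; apply/negP => c.
by move/eqP: LL0; apply; apply: uniqL0.
Qed.

Lemma off_lines_notin B l m x : B \subset pts l :|: pts m ->
  ~~ incident x l -> ~~ incident x m -> x \notin B.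
Proof.
move=> sB xl xm; apply/negP => /(subsetP sB).
by rewrite !inE (negbTE xl) (negbTE xm).
Qed.

(* A line through [x] meets [l] and [m] once each, so it carries at most one point of
   [B] on each of them. *)
Lemma secant_mult_le1_off_lines B l m L0 x : l != m -> ~~ incident x l -> ~~ incident x m ->
  B \subset pts l :|: pts m -> incident x L0 ->
  (forall L b b', incident x L -> b \in B -> b' \in B ->
      incident b L -> incident b' L -> incident b m -> incident b' l -> L = L0) ->
  (secant_mult B x <= 1)%N.
Proof.
move=> lm xl xm sB xL0 joinL0.
have neq_l L : incident x L -> L != l by move=> xL; apply: contraNneq xl => <-.
have neq_m L : incident x L -> L != m by move=> xL; apply: contraNneq xm => <-.
apply: (secant_mult_le1 xL0).
  move=> L xL /card_gt1P [b1 [b2 []]].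
  rewrite !inE => /andP [b1L b1B] /andP [b2L b2B] b12.
  have := subsetP sB _ b1B; have := subsetP sB _ b2B; rewrite !inE.
  case/orP => b2lm; case/orP => b1lm.
  - by case/eqP: (neq_l L xL); apply: (incident_line_uniq b12).
  - exact: (joinL0 L b1 b2).
  - exact: (joinL0 L b2 b1).
  - by case/eqP: (neq_m L xL); apply: (incident_line_uniq b12).
have -> : pts L0 :&: B = pts L0 :&: B :&: (pts l :|: pts m).
  by apply/esym/setIidPl; apply: subset_trans sB; apply: subsetIr.
rewrite setIUr; apply: leq_trans (leq_card_setU _ _) _.
rewrite -[2%N]/(1 + 1)%N; apply: leq_add.
- apply: leq_trans (card_ptsI_le1 (neq_l _ xL0)).
  by apply/subset_leq_card/setSI/subsetIl.
- apply: leq_trans (card_ptsI_le1 (neq_m _ xL0)).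
  by apply/subset_leq_card/setSI/subsetIl.
Qed.

Lemma not_saturating2_of_point B x : x \notin B -> (secant_mult B x <= 1)%N -> ~ saturating 2 B.
Proof. by move=> xB x1 [_ _ /(_ x xB)]; rewrite leqNgt ltnS x1. Qed.

End Secants.

Section Deletion.
Variables (F : finFieldType) (l m : line F) (B : {set point F}).
Hypotheses (lm : l != m) (sB : B \subset pts l :|: pts m).

(* The witness is a point [x] of the line [UQ]: its join with [U] meets [l] only in
   [Q], so the join with [V] is its only secant. *)
Lemma not_saturating_two_on_m Q U V :
  incident Q l -> ~~ incident Q m -> incident U m -> ~~ incident U l -> incident V m ->
  Q \notin B -> (forall b, b \in B -> incident b m -> b = U \/ b = V) ->
  ~ saturating 2 B.
Proof.
move=> Ql Qm Um Ul Vm QB Bm.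
have UQ : U != Q by apply: contraNneq Ul => ->.
have [LU /andP [ULU QLU]] := exists_line_incident UQ.
have [x /and3P [xLU xU xQ]] := exists_point_incident_neq2 LU U Q.
have xl : ~~ incident x l.
  by apply: contraNN Ul => xl; rewrite -(incident_line_uniq xQ xLU QLU xl Ql).
have xm : ~~ incident x m.
  by apply: contraNN Qm => xm; rewrite -(incident_line_uniq xU xLU ULU xm Um).
have xV : x != V by apply: contraNneq xm => ->.
have [L0 /andP [xL0 VL0]] := exists_line_incident xV.
apply: (not_saturating2_of_point (off_lines_notin sB xl xm)).
apply: (secant_mult_le1_off_lines lm xl xm sB xL0) => L b b' xL bB b'B bL b'L bm b'l.
case: (Bm b bB bm) => eb; subst b; last exact: (incident_line_uniq xV).
have LUl : LU != l by apply: contraNneq Ul => <-.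
rewrite (incident_line_uniq xU xL bL xLU ULU) in b'L.
by move: b'B; rewrite (incident_point_uniq LUl b'L b'l QLU Ql) (negbTE QB).
Qed.

(* The witness is the meet [x] of [YR] and [QS]: its joins with [R] and [S] meet [l]
   in [Y] and [Q], so the join with [T] is its only secant. *)
Lemma not_saturating_hole_on_l Q Y R S T :
  incident Q l -> ~~ incident Q m -> incident Y l -> ~~ incident Y m -> Y != Q ->
  incident R m -> incident S m -> ~~ incident R l -> ~~ incident S l -> R != S ->
  incident T m -> Q \notin B -> Y \notin B ->
  (forall b, b \in B -> incident b m -> [\/ b = R, b = S | b = T]) ->
  ~ saturating 2 B.
Proof.
move=> Ql Qm Yl Ym YQ Rm Sm Rl Sl RS Tm QB YB Bm.
have YR : Y != R by apply: contraNneq Rl => <-.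
have QS : Q != S by apply: contraNneq Sl => <-.
have [L1 /andP [YL1 RL1]] := exists_line_incident YR.
have [L2 /andP [QL2 SL2]] := exists_line_incident QS.
have L1l : L1 != l by apply: contraNneq Rl => <-.
have L2l : L2 != l by apply: contraNneq Sl => <-.
have L1m : L1 != m by apply: contraNneq Ym => <-.
have L2m : L2 != m by apply: contraNneq Qm => <-.
have L12 : L1 != L2.
  by apply: contraNneq L1l => L12; apply/eqP/(incident_line_uniq YQ YL1 _ Yl Ql); rewrite L12.
have [x /andP [xL1 xL2]] := exists_point_incident L12.
have xl : ~~ incident x l.
  apply: contraNN YQ => xl; apply/eqP.
  by rewrite -(incident_point_uniq L1l xL1 xl YL1 Yl) (incident_point_uniq L2l xL2 xl QL2 Ql).
have xm : ~~ incident x m.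
  apply: contraNN RS => xm; apply/eqP.
  by rewrite -(incident_point_uniq L1m xL1 xm RL1 Rm) (incident_point_uniq L2m xL2 xm SL2 Sm).
have xR : x != R by apply: contraNneq xm => ->.
have xS : x != S by apply: contraNneq xm => ->.
have xT : x != T by apply: contraNneq xm => ->.
have [L0 /andP [xL0 TL0]] := exists_line_incident xT.
apply: (not_saturating2_of_point (off_lines_notin sB xl xm)).
apply: (secant_mult_le1_off_lines lm xl xm sB xL0) => L b b' xL bB b'B bL b'L bm b'l.
case: (Bm b bB bm) => eb; subst b.
- rewrite (incident_line_uniq xR xL bL xL1 RL1) in b'L.
  by move: b'B; rewrite (incident_point_uniq L1l b'L b'l YL1 Yl) (negbTE YB).
- rewrite (incident_line_uniq xS xL bL xL2 SL2) in b'L.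
  by move: b'B; rewrite (incident_point_uniq L2l b'L b'l QL2 Ql) (negbTE QB).
- exact: (incident_line_uniq xT).
Qed.

End Deletion.

Section Configuration.
Variables (F : finFieldType) (l m : line F) (P Q R S T : point F).
Hypotheses (q4 : (4 <= #|F|)%N) (lm : l != m) (Pl : incident P l) (Pm : incident P m)
  (Ql : incident Q l) (QP : Q != P) (Rm : incident R m) (Sm : incident S m)
  (Tm : incident T m) (RP : R != P) (SP : S != P) (TP : T != P)
  (RS : R != S) (RT : R != T) (ST : S != T).

Local Notation A := ((pts l :\: [set P; Q]) :|: [set R; S; T]).

Let Rl : ~~ incident R l := incident_meetN lm Pl Pm Rm RP.
Let Sl : ~~ incident S l := incident_meetN lm Pl Pm Sm SP.
Let Tl : ~~ incident T l := incident_meetN lm Pl Pm Tm TP.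
Let ml : m != l. Proof. by rewrite eq_sym. Qed.
Let Qm : ~~ incident Q m := incident_meetN ml Pm Pl Ql QP.

Lemma mem_A y :
  (y \in A) = [&& y != P, y != Q & incident y l] || [|| y == R, y == S | y == T].
Proof. by rewrite !inE negb_or -andbA -orbA. Qed.

Lemma Q_notin_A : Q \notin A.
Proof.
rewrite mem_A eqxx andbF /=.
by apply/or3P => -[] /eqP Qe; [move: Rl | move: Sl | move: Tl]; rewrite -Qe Ql.
Qed.

Lemma P_notin_A : P \notin A.
Proof. by rewrite mem_A eqxx /= ![P == _]eq_sym (negbTE RP) (negbTE SP) (negbTE TP). Qed.

Lemma A_sub_lines : A \subset pts l :|: pts m.
Proof.
apply/subsetP => y; rewrite mem_A !inE => /orP [/and3P [_ _ ->] //|].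
by case/or3P => /eqP ->; rewrite ?Rm ?Sm ?Tm orbT.
Qed.

Lemma A_on_m b : b \in A -> incident b m -> [\/ b = R, b = S | b = T].
Proof.
rewrite mem_A => /orP [/and3P [bP _ bl] bm|].
  by case/eqP: bP; apply: (incident_point_uniq lm).
by case/or3P => /eqP ->; [constructor 1 | constructor 2 | constructor 3].
Qed.

Lemma card_A_l : #|pts l :\: [set P; Q]| = (#|F| - 1)%N.
Proof.
have PQl : [set P; Q] \subset pts l.
  by apply/subsetP => y; rewrite !inE => /orP [] /eqP ->.
by rewrite cardsD (setIidPr PQl) card_pts cards2 eq_sym QP addn1 subSS subn1.
Qed.

Lemma card_RST : #|[set R; S; T]| = 3%N.
Proof. by rewrite -setUA cardsU1 cards2 ST !inE negb_or RS RT. Qed.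

Lemma card_A : #|A| = (#|F| + 2)%N.
Proof.
have disj : (pts l :\: [set P; Q]) :&: [set R; S; T] = set0.
  apply/setP => y; rewrite !inE -orbA; apply/negP => /andP [/andP [_ yl]].
  by case/or3P => /eqP ye; move: yl; rewrite ye ?(negbTE Rl) ?(negbTE Sl) ?(negbTE Tl).
rewrite cardsU disj cards0 subn0 card_A_l card_RST -[3%N]/(1 + 2)%N addnA.
by rewrite subnK // ltnW // card_finNzRing_gt1.
Qed.

Lemma spans_A : spans A.
Proof.
have [Y1 [Y2 [Y1A Y2A Y12]]] : exists Y1 Y2,
    [/\ Y1 \in pts l :\: [set P; Q], Y2 \in pts l :\: [set P; Q] & Y1 != Y2].
  by apply/card_gt1P; rewrite card_A_l ltn_subRL (leq_trans _ q4).
apply: (spans_of_noncollinear (L := l) (R := R) _ _ _ Y12) => //.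
- by rewrite inE Y1A.
- by rewrite inE Y2A.
- by rewrite mem_A eqxx orbT.
- by move: Y1A; rewrite !inE => /andP [].
- by move: Y2A; rewrite !inE => /andP [].
Qed.

Lemma secant_of_join x U L : ~~ incident x m -> incident x L ->
  U \in A -> incident U m -> incident U L -> ~~ incident Q L -> (2 <= #|pts L :&: A|)%N.
Proof.
move=> xm xL UA Um UL QL.
have UP : U != P by apply: contraTneq UA => ->; exact: P_notin_A.
have Ul := incident_meetN lm Pl Pm Um UP.
have Ll : L != l by apply: contraNneq Ul => <-.
have [Y /andP [YL Yl]] := exists_point_incident Ll.
have YP : Y != P.
  apply: contraNneq xm => YP; rewrite YP in YL.
  by rewrite -(incident_line_uniq UP UL YL Um Pm).
have YQ : Y != Q by apply: contraNneq QL => <-.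
apply/card_gt1P; exists U, Y; split.
- by rewrite in_setI [U \in pts L]inE UL UA.
- by rewrite in_setI [Y \in pts L]inE YL mem_A YP YQ Yl.
- by apply: contraNneq Ul => ->.
Qed.

Lemma secant_mult_A_off_lines x : ~~ incident x l -> ~~ incident x m ->
  (2 <= secant_mult A x)%N.
Proof.
move=> xl xm.
have xQ : x != Q by apply: contraNneq xl => ->.
have join U : incident U m -> exists2 L, incident x L & incident U L.
  move=> Um; have xU : x != U by apply: contraNneq xm => ->.
  by have [L /andP [xL UL]] := exists_line_incident xU; exists L.
have joins_neq U V LU LV : incident U m -> incident V m -> U != V ->
    incident x LU -> incident U LU -> incident x LV -> incident V LV -> LU != LV.
  move=> Um Vm UV xLU ULU xLV VLV; apply: contraNneq xm => LUV.
  by rewrite -(incident_line_uniq UV ULU _ Um Vm) // LUV.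
have Q_once LU LV : LU != LV -> incident x LU -> incident x LV ->
    incident Q LU -> ~~ incident Q LV.
  by move=> LUV xLU xLV QLU; apply: contraNN LUV => QLV; apply/eqP/(incident_line_uniq xQ).
have RA : R \in A by rewrite mem_A eqxx !orbT.
have SA : S \in A by rewrite mem_A eqxx !orbT.
have TA : T \in A by rewrite mem_A eqxx !orbT.
have [LR xLR RLR] := join R Rm; have [LS xLS SLS] := join S Sm.
have [LT xLT TLT] := join T Tm.
have RSn := joins_neq _ _ _ _ Rm Sm RS xLR RLR xLS SLS.
have RTn := joins_neq _ _ _ _ Rm Tm RT xLR RLR xLT TLT.
have STn := joins_neq _ _ _ _ Sm Tm ST xLS SLS xLT TLT.
have sec := secant_of_join xm.
have [QLR|QLR] := boolP (incident Q LR).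
  apply: (secant_mult_ge2 STn xLS xLT).
  - exact: (sec _ _ xLS SA Sm SLS (Q_once _ _ RSn xLR xLS QLR)).
  - exact: (sec _ _ xLT TA Tm TLT (Q_once _ _ RTn xLR xLT QLR)).
have [QLS|QLS] := boolP (incident Q LS).
  apply: (secant_mult_ge2 RTn xLR xLT); first exact: (sec _ _ xLR RA Rm RLR QLR).
  exact: (sec _ _ xLT TA Tm TLT (Q_once _ _ STn xLS xLT QLS)).
apply: (secant_mult_ge2 RSn xLR xLS); first exact: (sec _ _ xLR RA Rm RLR QLR).
exact: (sec _ _ xLS SA Sm SLS QLS).
Qed.

Lemma saturating_A : saturating 2 A.
Proof.
split; [exact: spans_A | by apply: contraNneq P_notin_A => ->; rewrite inE |].
move=> x xA; have [xm|xm] := boolP (incident x m).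
  apply: (secant_mult_ge2_rich xm); rewrite -card_RST subset_leq_card //.
  apply/subsetP => y yRST; rewrite in_setI in_setU yRST orbT andbT inE.
  by move: yRST; rewrite !inE -orbA => /or3P [] /eqP ->.
have [xl|xl] := boolP (incident x l); last exact: secant_mult_A_off_lines.
apply: (secant_mult_ge2_rich xl).
have : (3 <= #|pts l :\: [set P; Q]|)%N by rewrite card_A_l ltn_subRL.
move/leq_trans; apply; apply/subset_leq_card/subsetP => y yl.
by rewrite in_setI in_setU yl; move: yl; rewrite !inE => /andP [_ ->].
Qed.

Lemma not_saturating_proper_subset (B : {set point F}) : B \proper A -> ~ saturating 2 B.
Proof.
case/properP => BA [a aA aB].
have sB := subset_trans BA A_sub_lines.
have QB : Q \notin B := contra (subsetP BA Q) Q_notin_A.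
have Bm b : b \in B -> incident b m -> [\/ b = R, b = S | b = T] /\ b != a.
  move=> bB bm; split; first exact: A_on_m (subsetP BA b bB) bm.
  by apply: contraNneq aB => <-.
move: aA; rewrite mem_A => /orP [/and3P [aP aQ al] | /or3P [] /eqP ea].
- have am := incident_meetN ml Pm Pl al aP.
  apply: (not_saturating_hole_on_l lm sB Ql Qm al am aQ Rm Sm Rl Sl RS Tm QB aB).
  by move=> b bB bm; case: (Bm b bB bm).
- subst a; apply: (not_saturating_two_on_m lm sB Ql Qm Sm Sl Tm QB) => b bB bm.
  by case: (Bm b bB bm) => -[] -> bR; [rewrite eqxx in bR | left | right].
- subst a; apply: (not_saturating_two_on_m lm sB Ql Qm Rm Rl Tm QB) => b bB bm.
  by case: (Bm b bB bm) => -[] -> bS; [left | rewrite eqxx in bS | right].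
- subst a; apply: (not_saturating_two_on_m lm sB Ql Qm Rm Rl Sm QB) => b bB bm.
  by case: (Bm b bB bm) => -[] -> bT; [left | right | rewrite eqxx in bT].
Qed.

Lemma minimal_saturating_A : minimal_saturating 2 (#|F| + 2) A.
Proof.
split; [exact: saturating_A | exact: card_A |].
case=> B [BA cardB]; apply: not_saturating_proper_subset.
by rewrite properEcard BA card_A cardB addn2 /= ltnSn.
Qed.

End Configuration.

Theorem theorem6p6 (F : finFieldType) (l m : line F) (P Q R S T : point F) :
  (4 <= #|F|)%N ->
  l != m ->
  P \in pts l -> P \in pts m ->
  Q \in pts l -> Q != P ->
  R \in pts m -> S \in pts m -> T \in pts m ->
  R != P -> S != P -> T != P ->
  R != S -> R != T -> S != T ->
  minimal_saturating 2 (#|F| + 2)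
    ((pts l :\: [set P; Q]) :|: [set R; S; T]).
Proof.
move=> q4 lm Pl Pm Ql QP Rm Sm Tm RP SP TP RS RT ST.
rewrite !inE in Pl Pm Ql Rm Sm Tm.
exact: minimal_saturating_A q4 lm Pl Pm Ql QP Rm Sm Tm RP SP TP RS RT ST.
Qed.
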